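(* Let $U\subset\operatorname{int}(\mathbb{R}^k_+)$ be a compact set containing a nonempty open set, and let $\lambda_0>1$ be defined by $\ln\lambda_0=\max_{x,y\in U}d_T(x,y)$. Let $f\colon\operatorname{int}(\mathbb{R}^k_+)\to\operatorname{int}(\mathbb{R}^k_+)$ be monotonic ($x\le y\Rightarrow f(x)\le f(y)$). If there exists $c\in[0,1)$ such that $f(\lambda x)\le\lambda^c f(x)$ for all $x\in U$ and all $\lambda\in(1,\lambda_0]$, then $d_T(f(x),f(y))\le c\,d_T(x,y)$ for all $x,y\in U$.
   Context: $\operatorname{int}(\mathbb{R}^k_+)$ is the set of vectors in $\mathbb{R}^k$ with strictly positive coordinates; $x\le y$ means $y-x$ has nonnegative coordinates. Thompson's metric: $d_T(x,y)=\ln\max\{M(x,y),M(y,x)\}$ with $M(x,y)=\inf\{\beta>0: x\le\beta y\}$. Compactness and openness refer to the usual topology of $\mathbb{R}^k$ (equivalently, for compactness, to the topology of $d_T$). *)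

From HB Require Import structures.
From mathcomp Require Import all_boot all_order all_algebra.
From mathcomp Require Import all_classical all_reals all_analysis.
Set Implicit Arguments. Unset Strict Implicit. Unset Printing Implicit Defensive.
Import Order.TTheory GRing.Theory Num.Theory.
Import numFieldNormedType.Exports.
Local Open Scope classical_set_scope.
Local Open Scope ring_scope.

Definition posint {R : realType} {k : nat} : set 'rV[R]_k :=
  [set x | forall i : 'I_k, 0 < x ord0 i].

Definition vle {R : realType} {k : nat} (x y : 'rV[R]_k) : Prop :=
  forall i : 'I_k, x ord0 i <= y ord0 i.

Definition Mth {R : realType} {k : nat} (x y : 'rV[R]_k) : R :=
  inf [set beta : R | 0 < beta /\ vle x (beta *: y)].

Definition dT {R : realType} {k : nat} (x y : 'rV[R]_k) : R :=
  ln (Num.max (Mth x y) (Mth y x)).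

(* If [x <= mu y] and [y <= mu x] with [mu = exp (dT x y) > 1], then [mu <= lam0], so
   monotonicity and subhomogeneity give [f x <= f (mu y) <= mu^c f y] and symmetrically
   [f y <= mu^c f x]; hence [dT (f x) (f y) <= ln (mu^c) = c dT x y].  If [mu <= 1] then
   [x = y].  Compactness of [U] and the open subset only serve to make [lam0] well defined
   in the paper; the argument never uses them. *)

From HB Require Import structures.
From mathcomp Require Import all_boot all_order all_algebra.
From mathcomp Require Import all_classical all_reals all_analysis.
Set Implicit Arguments. Unset Strict Implicit. Unset Printing Implicit Defensive.
Import Order.TTheory GRing.Theory Num.Theory.
Import numFieldNormedType.Exports.
Local Open Scope classical_set_scope.
Local Open Scope ring_scope.

Section Thompson.
Context {R : realType} {k : nat}.
Implicit Types (x y z : 'rV[R]_k) (b : R).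

Lemma vle_trans x y z : vle x y -> vle y z -> vle x z.
Proof. by move=> xy yz i; apply: le_trans (xy i) (yz i). Qed.

Lemma vle_anti x y : vle x y -> vle y x -> x = y.
Proof.
by move=> xy yx; apply/matrixP => i j; rewrite [i]ord1; apply/le_anti; rewrite xy yx.
Qed.

Lemma vle_scalel x b : posint x -> b <= 1 -> vle (b *: x) x.
Proof. by move=> px b1 i; rewrite mxE ler_piMl // ltW. Qed.

Lemma vle_scaler x b b' : posint x -> b <= b' -> vle (b *: x) (b' *: x).
Proof. by move=> px bb' i; rewrite !mxE ler_pM2r. Qed.

Lemma posint_scale x b : 0 < b -> posint x -> posint (b *: x).
Proof. by move=> b0 px i; rewrite mxE mulr_gt0. Qed.

Lemma Mth_set_lbound x y : has_lbound [set b | 0 < b /\ vle x (b *: y)].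
Proof. by exists 0 => b [/ltW]. Qed.

Lemma Mth_set_neq0 x y : posint x -> posint y ->
  [set b | 0 < b /\ vle x (b *: y)] !=set0.
Proof.
move=> px py; have ratio_ge0 j : 0 <= x ord0 j / y ord0 j by rewrite divr_ge0 // ltW.
exists (\sum_j x ord0 j / y ord0 j + 1); split.
  by rewrite ltr_wpDl // sumr_ge0.
move=> i; rewrite mxE -ler_pdivrMr // (bigD1 i) //= -addrA ler_wpDr //.
by rewrite addr_ge0 // sumr_ge0.
Qed.

Lemma Mth_le x y b : 0 < b -> vle x (b *: y) -> Mth x y <= b.
Proof. by move=> b0 xy; rewrite /Mth; apply: (ge_inf (Mth_set_lbound x y)). Qed.

Lemma Mth_ge0 x y : posint x -> posint y -> 0 <= Mth x y.
Proof.
by move=> px py; rewrite /Mth; apply: (lb_le_inf (Mth_set_neq0 px py)) => b [/ltW].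
Qed.

Lemma vle_Mth x y : posint x -> posint y -> vle x (Mth x y *: y).
Proof.
move=> px py i; rewrite mxE -ler_pdivrMr //.
rewrite /Mth; apply: (lb_le_inf (Mth_set_neq0 px py)) => b [_ /(_ i)].
by rewrite mxE -ler_pdivrMr.
Qed.

Lemma vle_max_Mth x y : posint x -> posint y ->
  vle x (Num.max (Mth x y) (Mth y x) *: y).
Proof.
by move=> px py; apply: vle_trans (vle_Mth px py) (vle_scaler py _); rewrite le_max lexx.
Qed.

(* For [k = 0] every [b > 0] bounds [Mth x x], which is then [0], and [ln 0 = 0]. *)
Lemma dT_self x : posint x -> dT x x = 0.
Proof.
move=> px; have Mxx_le1 : Mth x x <= 1 by apply: Mth_le => // i; rewrite scale1r.
rewrite /dT maxxx; have [k0|kp] := posnP k.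
  suff /le_anti Mxx0 : Mth x x <= 0 <= Mth x x by rewrite Mxx0 ln0.
  rewrite Mth_ge0 // andbT; apply/ler_addgt0Pr => e e0.
  by rewrite add0r; apply: Mth_le => // i; have := ltn_ord i; rewrite {2}k0.
suff -> : Mth x x = 1 by rewrite ln1.
apply/le_anti; rewrite Mxx_le1 /=.
rewrite /Mth; apply: (lb_le_inf (Mth_set_neq0 px px)) => b [_ /(_ (Ordinal kp))].
by rewrite mxE -{1}(mul1r (x ord0 _)) ler_pM2r.
Qed.

Lemma dT_le_ln x y b : 1 <= b -> vle x (b *: y) -> vle y (b *: x) -> dT x y <= ln b.
Proof.
move=> b1 xy yx; have b0 : 0 < b by apply: lt_le_trans b1.
have Mle : Num.max (Mth x y) (Mth y x) <= b by rewrite ge_max !Mth_le.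
rewrite /dT; have [M0|M0] := leP (Num.max (Mth x y) (Mth y x)) 0.
  by rewrite ln0 // ln_ge0.
by rewrite ler_ln ?posrE.
Qed.

Lemma le_of_ln_le (a b : R) : 0 < a -> 0 < ln a -> ln a <= ln b -> a <= b.
Proof.
move=> a0 lna lnab; have [b0|b0] := leP b 0.
  by move: lnab; rewrite (ln0 b0) leNgt lna.
by rewrite -ler_ln ?posrE.
Qed.

Section Contraction.
Variables (f : 'rV[R]_k -> 'rV[R]_k) (c : R).
Hypothesis f_mono : forall x y, posint x -> posint y -> vle x y -> vle (f x) (f y).

Lemma vle_subhomogeneous x y b : posint x -> posint y -> 0 < b ->
  vle x (b *: y) -> vle (f (b *: y)) (b `^ c *: f y) -> vle (f x) (b `^ c *: f y).
Proof. by move=> px py b0 xy; apply/vle_trans/f_mono => //; apply: posint_scale. Qed.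

Lemma dT_subhomogeneous_le x y b : posint x -> posint y -> 1 <= b -> 0 <= c ->
  vle x (b *: y) -> vle y (b *: x) ->
  vle (f (b *: y)) (b `^ c *: f y) -> vle (f (b *: x)) (b `^ c *: f x) ->
  dT (f x) (f y) <= c * ln b.
Proof.
move=> px py b1 c0 xy yx fy fx; have b0 : 0 < b by apply: lt_le_trans b1.
rewrite -ln_powR; apply: dT_le_ln; last 2 first.
- exact: vle_subhomogeneous xy fy.
- exact: vle_subhomogeneous yx fx.
by rewrite -(powRr0 b) ler_powR.
Qed.

End Contraction.

End Thompson.

Theorem corollary3 (R : realType) (k : nat) (U : set 'rV[R]_k)
  (f : 'rV[R]_k -> 'rV[R]_k) (lam0 c : R) :
  U `<=` posint ->
  compact U ->
  (exists V : set 'rV[R]_k, open V /\ V !=set0 /\ V `<=` U) ->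
  (exists x0 y0, U x0 /\ U y0 /\ ln lam0 = dT x0 y0) ->
  (forall x y, U x -> U y -> dT x y <= ln lam0) ->
  (forall x, posint x -> posint (f x)) ->
  (forall x y, posint x -> posint y -> vle x y -> vle (f x) (f y)) ->
  0 <= c -> c < 1 ->
  (forall x (lam : R), U x -> 1 < lam -> lam <= lam0 ->
     vle (f (lam *: x)) (lam `^ c *: f x)) ->
  forall x y, U x -> U y -> dT (f x) (f y) <= c * dT x y.
Proof.
move=> sU _ _ _ dT_le_lam0 pf f_mono c0 _ f_subhom x y Ux Uy.
have [px py] := (sU x Ux, sU y Uy).
have xy := vle_max_Mth px py; have := vle_max_Mth py px.
rewrite maxC; set mu := Num.max _ _ => yx.
have [mu_le1|mu_gt1] := leP mu 1.
  have exy : x = y.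
    apply: vle_anti; first exact: vle_trans xy (vle_scalel py mu_le1).
    exact: vle_trans yx (vle_scalel px mu_le1).
  by rewrite -exy (dT_self px) (dT_self (pf x px)) mulr0.
have mu_le_lam0 : mu <= lam0.
  by apply: le_of_ln_le (dT_le_lam0 x y Ux Uy); [apply: lt_trans mu_gt1|apply: ln_gt0].
have -> : dT x y = ln mu by [].
by apply: (dT_subhomogeneous_le f_mono px py (ltW mu_gt1) c0 xy yx); apply: f_subhom.
Qed.
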